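(* Let $T\ge 1$ be an integer, $\Delta t>0$, $E_0\in\mathbb{R}$, $P_{\max}>0$, charging and discharging efficiencies $\eta_{c},\eta_{d}\in(0,1]$, and a net-charge efficiency $\eta\in[\eta_{c},\tfrac{1}{\eta_{d}}]$. Let $\mathbf{A}\in\mathbb{R}^{T\times T}$ be the lower triangular matrix with $\mathbf{A}_{lk}=\Delta t$ for $k\le l$ and $\mathbf{A}_{lk}=0$ for $k>l$, and let $\mathbf{1}_T=(1,\dots,1)^\top\in\mathbb{R}^T$. Let $\mathbf{P}_c,\mathbf{P}_d,\mathbf{P}^r_c,\mathbf{P}^r_d\in[0,P_{\max}]^T$ and $\mathbf{P}_b\in\mathbb{R}^T$ be such that $$\mathbf{P}_b=\mathbf{P}_c-\mathbf{P}_d=\mathbf{P}^r_c-\mathbf{P}^r_d,$$ with $\mathbf{P}_c\cdot\mathbf{P}_d=\mathbf{0}$ and $\mathbf{P}^r_c\cdot\mathbf{P}^r_d\ge\mathbf{0}$ (componentwise products). Define the SoC trajectories $$\mathbf{E}(\mathbf{P}_c,\mathbf{P}_d)=\mathbf{1}_TE_0+\eta_c\mathbf{A}\mathbf{P}_c-\tfrac{1}{\eta_d}\mathbf{A}\mathbf{P}_d,\qquad \mathbf{E}^r(\mathbf{P}^r_c,\mathbf{P}^r_d)=\mathbf{1}_TE_0+\eta_c\mathbf{A}\mathbf{P}^r_c-\tfrac{1}{\eta_d}\mathbf{A}\mathbf{P}^r_d,$$ $$\mathbf{E}^s(\mathbf{P}_b)=\mathbf{1}_TE_0+\eta\,\mathbf{A}\mathbf{P}_b.$$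 Then, componentwise, $$\mathbf{E}^r(\mathbf{P}^r_c,\mathbf{P}^r_d)\le\mathbf{E}(\mathbf{P}_c,\mathbf{P}_d)\le\mathbf{E}^s(\mathbf{P}_b).$$
   Context: This models a battery over time steps $k=0,\dots,T-1$ of duration $\Delta t$: $\mathbf{E}$ is the actual (standard-model) state-of-charge trajectory under charging input $\mathbf{P}_c$ and discharging input $\mathbf{P}_d$ that are never simultaneously nonzero; $\mathbf{E}^r$ is the trajectory of the relaxed model, in which simultaneous charging and discharging is allowed; $\mathbf{E}^s$ is the trajectory of the simplified one-input model driven by the net-charging input $\mathbf{P}_b$ with a single efficiency $\eta$. Vector inequalities and products are taken componentwise. *)

From mathcomp Require Import all_boot all_order all_algebra.
Set Implicit Arguments. Unset Strict Implicit. Unset Printing Implicit Defensive.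
Import Order.TTheory GRing.Theory Num.Theory.
Local Open Scope ring_scope.

Definition Amx (R : ringType) (T : nat) (dt : R) : 'M[R]_T :=
  \matrix_(l < T, k < T) (if (k <= l)%N then dt else 0).

Definition ones (R : ringType) (T : nat) : 'cV[R]_T := const_mx 1.

Definition Esoc (R : fieldType) (T : nat) (dt E0 eta_c eta_d : R)
  (Pc Pd : 'cV[R]_T) : 'cV[R]_T :=
  E0 *: ones R T + eta_c *: (Amx T dt *m Pc) - eta_d^-1 *: (Amx T dt *m Pd).

Definition Esimp (R : fieldType) (T : nat) (dt E0 eta : R)
  (Pb : 'cV[R]_T) : 'cV[R]_T :=
  E0 *: ones R T + eta *: (Amx T dt *m Pb).

Definition vle (R : numDomainType) (T : nat) (u v : 'cV[R]_T) : Prop :=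
  forall i : 'I_T, u i 0 <= v i 0.

From mathcomp Require Import all_boot all_order all_algebra.
From mathcomp Require Import lra.
Import Order.TTheory GRing.Theory Num.Theory.
Local Open Scope ring_scope.

(* Both bounds are proved step by step on the per-step SoC increments, and then
   summed by the nonnegative matrix [A].  Since the relaxed and the exclusive
   inputs have the same net power, they differ by a common simultaneous part
   [s = P^r_c - P_c = P^r_d - P_d >= 0], which costs [(1/eta_d - eta_c) s] of
   energy.  For exclusive inputs only one of [eta_c] and [1/eta_d] is active at
   each step, and [eta] lies between them. *)

Section Increments.
Variable R : realDomainType.

Lemma exclusive_le_relaxed {c d rc rd : R} :
  0 <= rc -> 0 <= rd -> c * d = 0 -> c - d = rc - rd -> c <= rc.
Proof.
move=> rc_ge0 rd_ge0 /eqP; rewrite mulf_eq0 => /orP[] /eqP-> net_eq; lra.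
Qed.

Lemma relaxed_increment_le {a u c d rc rd : R} :
  a <= u -> 0 <= rc -> 0 <= rd -> c * d = 0 -> c - d = rc - rd ->
  a * rc - u * rd <= a * c - u * d.
Proof.
move=> le_au rc_ge0 rd_ge0 cd0 net_eq.
have c_le_rc := exclusive_le_relaxed rc_ge0 rd_ge0 cd0 net_eq.
have : 0 <= (u - a) * (rc - c) by rewrite mulr_ge0 // subr_ge0.
nra.
Qed.

Lemma exclusive_increment_le {a e u c d : R} :
  a <= e -> e <= u -> 0 <= c -> 0 <= d -> c * d = 0 ->
  a * c - u * d <= e * (c - d).
Proof.
by move=> le_ae le_eu c_ge0 d_ge0 /eqP; rewrite mulf_eq0 => /orP[] /eqP->; nra.
Qed.

End Increments.

Lemma Esoc_Amx (R : fieldType) (T : nat) (dt E0 eta_c eta_d : R) (Pc Pd : 'cV[R]_T) :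
  Esoc dt E0 eta_c eta_d Pc Pd =
  E0 *: ones R T + Amx T dt *m (eta_c *: Pc - eta_d^-1 *: Pd).
Proof. by rewrite /Esoc mulmxBr !scalemxAr addrA. Qed.

Lemma Esimp_Amx (R : fieldType) (T : nat) (dt E0 eta : R) (Pb : 'cV[R]_T) :
  Esimp dt E0 eta Pb = E0 *: ones R T + Amx T dt *m (eta *: Pb).
Proof. by rewrite /Esimp scalemxAr. Qed.

Lemma vle_addl_Amx (R : numDomainType) (T : nat) (dt : R) (w u v : 'cV[R]_T) :
  0 <= dt -> vle u v -> vle (w + Amx T dt *m u) (w + Amx T dt *m v).
Proof.
move=> dt_ge0 le_uv i; rewrite !mxE lerD2l; apply: ler_sum => k _.
by rewrite !mxE; apply: ler_wpM2l; first by case: ifP.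
Qed.

Theorem lemma1 (R : realFieldType) (T : nat) (hT : (1 <= T)%N)
  (dt E0 Pmax eta_c eta_d eta : R)
  (hdt : 0 < dt) (hPmax : 0 < Pmax)
  (hc0 : 0 < eta_c) (hc1 : eta_c <= 1)
  (hd0 : 0 < eta_d) (hd1 : eta_d <= 1)
  (he0 : eta_c <= eta) (he1 : eta <= eta_d^-1)
  (Pc Pd Prc Prd Pb : 'cV[R]_T)
  (hPc : forall i, 0 <= Pc i 0 <= Pmax)
  (hPd : forall i, 0 <= Pd i 0 <= Pmax)
  (hPrc : forall i, 0 <= Prc i 0 <= Pmax)
  (hPrd : forall i, 0 <= Prd i 0 <= Pmax)
  (hb : Pb = Pc - Pd) (hbr : Pb = Prc - Prd)
  (hcd : forall i, Pc i 0 * Pd i 0 = 0)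
  (hcdr : forall i, 0 <= Prc i 0 * Prd i 0) :
  vle (Esoc dt E0 eta_c eta_d Prc Prd) (Esoc dt E0 eta_c eta_d Pc Pd) /\
  vle (Esoc dt E0 eta_c eta_d Pc Pd) (Esimp dt E0 eta Pb).
Proof.
rewrite Esimp_Amx !Esoc_Amx.
split; apply: vle_addl_Amx (ltW hdt) _ => k; rewrite !mxE.
- apply: relaxed_increment_le (le_trans he0 he1) _ _ (hcd k) _.
  + by case/andP: (hPrc k).
  + by case/andP: (hPrd k).
  + by move: hbr; rewrite hb => /matrixP/(_ k 0); rewrite !mxE.
- rewrite hb !mxE; apply: exclusive_increment_le he0 he1 _ _ (hcd k).
  + by case/andP: (hPc k).
  + by case/andP: (hPd k).
Qed.
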